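(* For every modal proposition $A$: (1) if $A\in\mathsf{NOI}$ then $\mathsf{iK4}+\mathsf{CP}_a\vdash A\to\Box A$; (2) $\mathsf{iK4}\vdash A^l\to A$; (3) if $A\in\mathsf{NOI}$ then $\mathsf{iK4}+\mathsf{CP}_a\vdash A^l\leftrightarrow A$; (4) $\mathsf{LLe}^+\vdash\Box A^l\leftrightarrow\Box A$.
   Context: Modal language: propositional variables, $\bot$, $\wedge,\vee,\to$, $\Box$; atomic = variables and $\bot$; $\boxdot A:=A\wedge\Box A$. $\mathsf{iK4}$: intuitionistic propositional logic in the modal language plus $\Box(A\to B)\to(\Box A\to\Box B)$ and $\Box A\to\Box\Box A$, closed under modus ponens and necessitation; $\mathsf{iGL}$: $\mathsf{iK4}$ plus $\Box(\Box A\to A)\to\Box A$. $\mathsf{CP}_a$: $p\to\Box p$ for atomic $p$. $\mathsf{NOI}$: propositions in which every $\to$ lies in the scope of a $\Box$. Leivant's translation: $A^l=A$ for atomic/boxed $A$; $(A\wedge B)^l=A^l\wedge B^l$; $(A\vee B)^l=\boxdot A^l\vee\boxdot B^l$; $(A\to B)^l=A\to B^l$ if $A\in\mathsf{NOI}$, else $A\to B$. $\mathsf{LLe}^+:=\mathsf{iGL}+\{\Box A\to\Box A^l\}+\mathsf{CP}_a$. *)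

Inductive form : Type :=
| Var : nat -> form
| Bot : form
| And : form -> form -> form
| Or  : form -> form -> form
| Imp : form -> form -> form
| Box : form -> form.

Definition Iff (A B : form) : form := And (Imp A B) (Imp B A).
Definition BoxDot (A : form) : form := And A (Box A).

Definition atomic (A : form) : Prop :=
  match A with Var _ | Bot => True | _ => False end.

(* NOI: every implication lies in the scope of a box *)
Fixpoint noi (A : form) : bool :=
  match A with
  | Var _ | Bot => true
  | And B C | Or B C => noi B && noi C
  | Imp _ _ => false
  | Box _ => true
  end.

Fixpoint leiv (A : form) : form :=
  match A with
  | Var n => Var n
  | Bot => Bot
  | Box B => Box B
  | And B C => And (leiv B) (leiv C)
  | Or B C => Or (BoxDot (leiv B)) (BoxDot (leiv C))
  | Imp B C => if noi B then Imp B (leiv C) else Imp B C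
  end.

Inductive prv (L : form -> Prop) : form -> Prop :=
| ax1 A B : prv L (Imp A (Imp B A))
| ax2 A B C : prv L (Imp (Imp A (Imp B C)) (Imp (Imp A B) (Imp A C)))
| ax3 A B : prv L (Imp (And A B) A)
| ax4 A B : prv L (Imp (And A B) B)
| ax5 A B : prv L (Imp A (Imp B (And A B)))
| ax6 A B : prv L (Imp A (Or A B))
| ax7 A B : prv L (Imp B (Or A B))
| ax8 A B C : prv L (Imp (Imp A C) (Imp (Imp B C) (Imp (Or A B) C)))
| ax9 A : prv L (Imp Bot A)
| axK A B : prv L (Imp (Box (Imp A B)) (Imp (Box A) (Box B)))
| ax4' A : prv L (Imp (Box A) (Box (Box A)))
| axL A : L A -> prv L A
| mp A B : prv L (Imp A B) -> prv L A -> prv L B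
| nec A : prv L A -> prv L (Box A).

Definition iK4_ax (A : form) : Prop := False.

Definition CPa_ax (A : form) : Prop := exists p, atomic p /\ A = Imp p (Box p).

Definition Lob_ax (A : form) : Prop :=
  exists B, A = Imp (Box (Imp (Box B) B)) (Box B).

Definition Leiv_ax (A : form) : Prop := exists B, A = Imp (Box B) (Box (leiv B)).

Definition iK4CPa_ax (A : form) : Prop := CPa_ax A.

Definition LLeplus_ax (A : form) : Prop := Lob_ax A \/ Leiv_ax A \/ CPa_ax A.

(* Boxed formulas are provably boxed by axiom 4 and atoms by CP_a, and both
   properties pass through conjunction and disjunction; hence every NOI formula
   A proves Box A (1).  The translation only strengthens: disjuncts gain a box
   and NOI antecedents are kept while consequents are translated, so A^l -> A
   by induction (2).  Conversely, for NOI A each disjunct B proves Box B by (1),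
   hence BoxDot B, which gives A -> A^l (3).  Finally (4) combines the boxed
   form of (2) with the Leivant axiom Box A -> Box A^l. *)

From Stdlib Require Import Bool.

Section Derived_rules.
Variable L : form -> Prop.

Lemma imp_refl A : prv L (Imp A A).
Proof.
  eapply mp; [eapply mp|].
  - apply (ax2 L A (Imp A A) A).
  - apply ax1.
  - apply (ax1 L A A).
Qed.

Lemma imp_trans A B C :
  prv L (Imp A B) -> prv L (Imp B C) -> prv L (Imp A C).
Proof.
  intros HAB HBC. eapply mp; [eapply mp|].
  - apply (ax2 L A B C).
  - eapply mp; [apply ax1 | exact HBC].
  - exact HAB.
Qed.

Lemma imp_and_intro A B C :
  prv L (Imp A B) -> prv L (Imp A C) -> prv L (Imp A (And B C)).
Proof.
  intros HB HC. eapply mp; [eapply mp|].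
  - apply (ax2 L A C (And B C)).
  - eapply imp_trans; [exact HB | apply ax5].
  - exact HC.
Qed.

Lemma imp_or_elim A B C :
  prv L (Imp A C) -> prv L (Imp B C) -> prv L (Imp (Or A B) C).
Proof. intros HA HB. eapply mp; [eapply mp; [apply ax8 | exact HA] | exact HB]. Qed.

Lemma imp_and_map A A' B B' :
  prv L (Imp A A') -> prv L (Imp B B') -> prv L (Imp (And A B) (And A' B')).
Proof.
  intros HA HB. apply imp_and_intro.
  - eapply imp_trans; [apply ax3 | exact HA].
  - eapply imp_trans; [apply ax4 | exact HB].
Qed.

Lemma imp_or_map A A' B B' :
  prv L (Imp A A') -> prv L (Imp B B') -> prv L (Imp (Or A B) (Or A' B')).
Proof.
  intros HA HB. apply imp_or_elim.
  - eapply imp_trans; [exact HA | apply ax6].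
  - eapply imp_trans; [exact HB | apply ax7].
Qed.

Lemma imp_concl_mono A B C : prv L (Imp B C) -> prv L (Imp (Imp A B) (Imp A C)).
Proof. intros HBC. eapply mp; [apply ax2 | eapply mp; [apply ax1 | exact HBC]]. Qed.

Lemma imp_uncurry A B C : prv L (Imp A (Imp B C)) -> prv L (Imp (And A B) C).
Proof.
  intros H. eapply mp; [eapply mp|].
  - apply (ax2 L (And A B) B C).
  - eapply imp_trans; [apply ax3 | exact H].
  - apply ax4.
Qed.

Lemma iff_intro A B : prv L (Imp A B) -> prv L (Imp B A) -> prv L (Iff A B).
Proof. intros HAB HBA. eapply mp; [eapply mp; [apply ax5 | exact HAB] | exact HBA]. Qed.

Lemma box_mono A B : prv L (Imp A B) -> prv L (Imp (Box A) (Box B)).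
Proof. intros H. eapply mp; [apply axK | apply nec, H]. Qed.

Lemma box_and A B : prv L (Imp (And (Box A) (Box B)) (Box (And A B))).
Proof. apply imp_uncurry. eapply imp_trans; [apply box_mono, ax5 | apply axK]. Qed.

Lemma box_or A B : prv L (Imp (Or (Box A) (Box B)) (Box (Or A B))).
Proof. apply imp_or_elim; apply box_mono; [apply ax6 | apply ax7]. Qed.

End Derived_rules.

Lemma leiv_imp L A : prv L (Imp (leiv A) A).
Proof.
  induction A as [n | | A IHA B IHB | A IHA B IHB | A _ B IHB | A _]; simpl;
    try apply imp_refl.
  - apply imp_and_map; assumption.
  - apply imp_or_map; eapply imp_trans; [apply ax3 | exact IHA | apply ax3 | exact IHB].
  - destruct (noi A); [apply imp_concl_mono, IHB | apply imp_refl].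
Qed.

Section Noi.
Variable L : form -> Prop.
Hypothesis CPa_sub : forall A, CPa_ax A -> L A.

Lemma noi_imp_box A : noi A = true -> prv L (Imp A (Box A)).
Proof.
  induction A as [n | | A IHA B IHB | A IHA B IHB | A _ B _ | A _]; simpl;
    intros Hnoi; try discriminate.
  - apply axL, CPa_sub. now exists (Var n).
  - apply axL, CPa_sub. now exists Bot.
  - apply andb_true_iff in Hnoi as [HA HB].
    eapply imp_trans; [apply imp_and_map; [apply IHA | apply IHB] | apply box_and];
      assumption.
  - apply andb_true_iff in Hnoi as [HA HB].
    eapply imp_trans; [apply imp_or_map; [apply IHA | apply IHB] | apply box_or];
      assumption.
  - apply ax4'.
Qed.

Lemma noi_imp_boxdot A : noi A = true -> prv L (Imp A (BoxDot A)).
Proof. intros Hnoi. apply imp_and_intro; [apply imp_refl | apply noi_imp_box, Hnoi]. Qed.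

Lemma noi_imp_leiv A : noi A = true -> prv L (Imp A (leiv A)).
Proof.
  induction A as [n | | A IHA B IHB | A IHA B IHB | A _ B _ | A _]; simpl;
    intros Hnoi; try discriminate; try apply imp_refl;
    apply andb_true_iff in Hnoi as [HA HB].
  - apply imp_and_map; auto.
  - apply imp_or_map.
    + eapply imp_trans; [apply noi_imp_boxdot, HA |].
      apply imp_and_map; [| apply box_mono]; auto.
    + eapply imp_trans; [apply noi_imp_boxdot, HB |].
      apply imp_and_map; [| apply box_mono]; auto.
Qed.

End Noi.

Theorem lemma4p20 : forall A : form,
  (noi A = true -> prv iK4CPa_ax (Imp A (Box A))) /\
  prv iK4_ax (Imp (leiv A) A) /\
  (noi A = true -> prv iK4CPa_ax (Iff (leiv A) A)) /\
  prv LLeplus_ax (Iff (Box (leiv A)) (Box A)).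
Proof.
  intros A. split; [| split; [| split]].
  - apply noi_imp_box; now intros B.
  - apply leiv_imp.
  - intros Hnoi. apply iff_intro; [apply leiv_imp | apply noi_imp_leiv; [now intros B | exact Hnoi]].
  - apply iff_intro; [apply box_mono, leiv_imp |].
    apply axL. right; left. now exists A.
Qed.
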